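(* Let $\mathbb{X}\in\{\mathbb{H},\mathbb{E},\mathbb{S}\}$, $d\ge 2$, let $p,q,x\in\mathbb{X}^d$, let $pq$ be a shortest geodesic segment from $p$ to $q$, and let $y$ be the point of $pq$ closest to $x$. Let $\varepsilon\in(0,1]$. If $|xy|\le\sqrt{\varepsilon}\,\min\{|py|,|qy|\}$, then (i) if $\mathbb{X}\in\{\mathbb{E},\mathbb{S}\}$: $|px|+|xq|\le(1+\varepsilon)|pq|$; (ii) if $\mathbb{X}=\mathbb{H}$ and $|pq|\le\Delta$ for some $\Delta>0$: $|px|+|xq|\le(1+e^{\Delta}\varepsilon)|pq|$.
   Context: $\mathbb{E}^d$ is Euclidean $d$-space, $\mathbb{S}^d$ the unit sphere in $\mathbb{R}^{d+1}$ with geodesic (great-circle) metric, $\mathbb{H}^d$ hyperbolic $d$-space of curvature $-1$; $|ab|$ denotes the distance between $a$ and $b$ in the respective space. *)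

From mathcomp Require Import all_boot all_order all_algebra.
From mathcomp Require Import all_classical all_reals all_analysis.
Set Implicit Arguments. Unset Strict Implicit. Unset Printing Implicit Defensive.
Import Order.TTheory GRing.Theory Num.Theory.
Local Open Scope ring_scope.

Section Spaces.
Variable R : realType.

Definition dotE (n : nat) (u v : 'rV[R]_n) : R := \sum_(i < n) u 0 i * v 0 i.

Definition ptE (d : nat) (u : 'rV[R]_d) : Prop := True.
Definition distE (d : nat) (u v : 'rV[R]_d) : R := Num.sqrt (dotE (u - v) (u - v)).

Definition ptS (d : nat) (u : 'rV[R]_d.+1) : Prop := dotE u u = 1.
Definition distS (d : nat) (u v : 'rV[R]_d.+1) : R := acos (dotE u v).

(* Hyperbolic space H^d (curvature -1), hyperboloid model in R^(1,d). *)
Definition minkowski (d : nat) (u v : 'rV[R]_d.+1) : R :=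
  - (u 0 ord0 * v 0 ord0) + \sum_(i < d) u 0 (lift ord0 i) * v 0 (lift ord0 i).
Definition ptH (d : nat) (u : 'rV[R]_d.+1) : Prop :=
  minkowski u u = -1 /\ 0 < u 0 ord0.
Definition arcosh (t : R) : R := ln (t + Num.sqrt (t ^+ 2 - 1)).
Definition distH (d : nat) (u v : 'rV[R]_d.+1) : R := arcosh (- minkowski u v).

Definition shortest_segment (T : Type) (P : T -> Prop) (dist : T -> T -> R)
    (p q : T) (g : R -> T) : Prop :=
  g 0 = p /\ g (dist p q) = q /\
  (forall t, 0 <= t <= dist p q -> P (g t)) /\
  (forall s t, 0 <= s <= dist p q -> 0 <= t <= dist p q ->
     dist (g s) (g t) = `|s - t|).

Definition closest_on_segment (T : Type) (dist : T -> T -> R)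
    (p q : T) (g : R -> T) (x y : T) : Prop :=
  exists t0, 0 <= t0 <= dist p q /\ y = g t0 /\
    (forall t, 0 <= t <= dist p q -> dist x y <= dist x (g t)).

End Spaces.

From mathcomp Require Import all_boot all_order all_algebra.
From mathcomp Require Import all_classical all_reals all_analysis.
From mathcomp Require Import ring lra.
Import Order.TTheory GRing.Theory Num.Theory numFieldNormedType.Exports.
Set Implicit Arguments. Unset Strict Implicit. Unset Printing Implicit Defensive.
Local Open Scope ring_scope.

(* In each of the three geometries the closest point y is the foot of the
   perpendicular from x to pq, so the right triangles p y x and q y x obey the
   Pythagorean law of that geometry: with a = |py| (resp. |qy|), h = |xy| and
   c = |px| (resp. |xq|), c^2 = a^2 + h^2, cos c = cos a cos h, and
   cosh c = cosh a cosh h.  Perpendicularity is a first-order condition: along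
   the segment, |x - g t|^2, dotE x (g t) and - minkowski x (g t) are explicit
   functions of t whose extremum at t = |py| forces the Pythagorean relation.
   Since h <= sqrt(eps) a, elementary estimates give c <= (1 + eps) a, resp.
   c <= (1 + e^Delta eps) a, and the two sides add up to the claim; when h = 0,
   x = y and there is nothing to prove. *)

(** * Real-variable inequalities *)

Section RealInequalities.
Variable R : realType.
Implicit Types a c h x y eps : R.

Lemma is_derive_ge0_le (f f' : R -> R) a c :
  (forall x, is_derive x 1 f (f' x)) -> (forall x, a <= x <= c -> 0 <= f' x) ->
  a <= c -> f a <= f c.
Proof.
move=> df df0 ac; have dv x : derivable f x 1 by exact: ex_derive.
apply: ger0_derive1_ndecr => //.
- move=> x /[!in_itv] /= /andP[ax xc].
  by rewrite derive1E (@derive_val _ _ _ _ _ _ _ (df x)) df0 // !ltW.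
- by apply: derivable_within_continuous => x _; exact: dv.
Qed.

Lemma ler_cos : {in `[0, pi] &, {mono (@cos R) : x y /~ y <= x}}.
Proof. by move=> x y xI yI; rewrite !leNgt ltr_cos. Qed.

Lemma sin_le_id x : 0 <= x -> sin x <= x.
Proof.
move=> x0.
have df y : is_derive y 1 (fun z => z - sin z) (1 - cos y) by exact: is_derive_eq.
have := is_derive_ge0_le df _ x0; rewrite sin0 subr0 subr_ge0; apply=> y _.
by rewrite subr_ge0 cos_le1.
Qed.

Lemma cos_ge_1_sub_sqr_half x : 1 - x ^+ 2 / 2 <= cos x.
Proof.
wlog x0 : x / 0 <= x.
  move=> H; have [/H//|x0] := lerP 0 x.
  by rewrite -cosN -sqrrN H // oppr_ge0 ltW.
have df y : is_derive y 1 (fun z => cos z - 1 + z ^+ 2 / 2) (y - sin y).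
  apply: is_derive_eq; rewrite !scaler0 !add0r subr0 [y%:A]mulr1 [_ *: _]mulrC; lra.
have df0 y : 0 <= y <= x -> 0 <= y - sin y.
  by case/andP=> y0 _; rewrite subr_ge0 sin_le_id.
have := is_derive_ge0_le df df0 x0; rewrite cos0 subrr expr0n /= mul0r; lra.
Qed.

Lemma mul_cos_le_sin x : 0 <= x <= pi -> x * cos x <= sin x.
Proof.
move=> /andP[x0 xpi].
have df y : is_derive y 1 (fun z => sin z - z * cos z) (y * sin y).
  by apply: is_derive_eq; rewrite [(cos y)%:A]mulr1 [_ *: _]mulrN; lra.
have df0 y : 0 <= y <= x -> 0 <= y * sin y.
  by case/andP=> y0 yx; rewrite mulr_ge0 // sin_ge0_pi // y0 (le_trans yx).
have := is_derive_ge0_le df df0 x0; rewrite sin0 mul0r; lra.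
Qed.

Lemma half_le_sin x : 0 <= x <= pi / 2 -> x / 2 <= sin x.
Proof.
move=> /andP[x0 xpi]; have pi0 := pi_gt0 R; have pi2 := pihalf_lt2 R.
have [cx|cx] := lerP (1 / 2) (cos x).
  have : x * cos x <= sin x by apply: mul_cos_le_sin; rewrite x0; lra.
  nra.
have df y : is_derive y 1 (fun z => z / 2 - sin z) (1 / 2 - cos y).
  by apply: is_derive_eq; rewrite !scaler0 add0r [_%:A]mulr1; lra.
have df0 y : x <= y <= pi / 2 -> 0 <= 1 / 2 - cos y.
  case/andP=> xy ypi; rewrite subr_ge0; suff : cos y <= cos x by lra.
  by rewrite ler_cos // !in_itv /=; apply/andP; split; lra.
have := is_derive_ge0_le df df0 xpi; rewrite sin_pihalf; lra.
Qed.

Lemma sqr_le_of_le_sqrtM h eps a : 0 <= h -> 0 <= eps -> 0 <= a ->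
  h <= Num.sqrt eps * a -> h ^+ 2 <= eps * a ^+ 2.
Proof.
move=> h0 e0 a0 ha; rewrite -[eps](sqr_sqrtr e0) -exprMn.
by rewrite ler_pXn2r ?nnegrE ?mulr_ge0 ?sqrtr_ge0.
Qed.

Lemma le_of_sqr_le x y : 0 <= y -> x ^+ 2 <= y ^+ 2 -> x <= y.
Proof.
move=> y0 xy; have [x0|x0] := lerP x 0; first exact: le_trans x0 y0.
by rewrite -(ler_pXn2r (n := 2)) // nnegrE ltW.
Qed.

(* The first-order condition at an interior extremum: [u] is an increment and
   [D] plays the role of the derivative. *)
Lemma eq0_of_mul_le_sqr (K D : R) :
  (forall e, 0 < e -> exists2 u, 0 < u < e & u * D <= K * u ^+ 2) ->
  (forall e, 0 < e -> exists2 u, - e < u < 0 & u * D <= K * u ^+ 2) -> D = 0.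
Proof.
move=> pos neg; apply/normr0_eq0/le_anti; rewrite normr_ge0 andbT leNgt.
apply/negP => D0.
have K1 : 0 < `|K| + 1 by rewrite ltr_wpDl.
set e := `|D| / (`|K| + 1).
have e0 : 0 < e by rewrite divr_gt0.
have Ke : `|K| * e < `|D|.
  by rewrite /e mulrA ltr_pdivrMr // mulrC ltr_pM2l // ltrDl.
have [u /andP[u0 ue] uD] := pos e e0.
have [v /andP[ve v0] vD] := neg e e0.
have Dup : D <= `|K| * e.
  have : D <= K * u by rewrite -(ler_pM2l u0) mulrCA -expr2.
  have := ler_norm (K * u); rewrite normrM [`|u|]gtr0_norm // => Ku.
  have := normr_ge0 K; nra.
have Dlow : - (`|K| * e) <= D.
  have : K * v <= D by rewrite -(ler_nM2l v0) mulrCA -expr2.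
  have := ler_norm (- (K * v)); rewrite normrN normrM [`|v|]ltr0_norm // => Kv.
  have := normr_ge0 K; nra.
have : `|D| <= `|K| * e by rewrite ler_norml Dlow Dup.
by rewrite leNgt Ke.
Qed.

Lemma hypotenuseE_le a h c eps : 0 <= a -> 0 <= eps ->
  h ^+ 2 <= eps * a ^+ 2 -> c ^+ 2 = a ^+ 2 + h ^+ 2 -> c <= (1 + eps) * a.
Proof.
move=> a0 e0 ha ca; apply: le_of_sqr_le; first by rewrite mulr_ge0 // addr_ge0.
by rewrite ca; nra.
Qed.

Lemma hypotenuseS_le a h c eps : 0 <= a <= pi -> 0 <= c <= pi -> 0 < eps <= 1 ->
  h ^+ 2 <= eps * a ^+ 2 -> cos c = cos a * cos h -> c <= (1 + eps) * a.
Proof.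
move=> /andP[a0 api] /andP[c0 cpi] /andP[e0 e1] ha ca.
(* For obtuse [a] already [c <= a]; otherwise compare [cos c] with
   [cos ((1 + eps) a) = cos a cos (eps a) - sin a sin (eps a)]. *)
have pi0 := pi_gt0 R; have pi2 := pihalf_lt2 R.
have aI : a \in `[0, pi] by rewrite in_itv /= a0.
have cI : c \in `[0, pi] by rewrite in_itv /= c0.
have [ca0|ca0] := lerP (cos a) 0.
  suff : c <= a by nra.
  by rewrite -(ler_cos cI aI) ca; have := cos_le1 h; nra.
have p2I : (pi / 2 : R) \in `[0, pi] by rewrite in_itv /=; apply/andP; split; lra.
have api2 : a < pi / 2 by rewrite ltNge -(ler_cos p2I aI) cos_pihalf -ltNge.
rewrite leNgt; apply/negP => ac.
have bI : (1 + eps) * a \in `[0, pi].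
  by rewrite in_itv /=; apply/andP; split; nra.
have := ac; rewrite -(ltr_cos bI cI) ca mulrDl mul1r cosD; apply/negP; rewrite -leNgt.
have sa : a * cos a <= sin a by apply: mul_cos_le_sin; rewrite a0.
have ea0 : 0 <= eps * a by rewrite mulr_ge0 // ltW.
have sea : eps * a / 2 <= sin (eps * a).
  apply: half_le_sin; rewrite ea0 /=.
  have : eps * a <= a by nra.
  lra.
have s1 : cos a * cos (eps * a) <= cos a by have := cos_le1 (eps * a); nra.
have s2 : a * cos a * (eps * a / 2) <= sin a * sin (eps * a).
  apply: ler_pM => //; first by rewrite mulr_ge0 // ltW.
  by rewrite divr_ge0.
have s3 : cos a * (1 - h ^+ 2 / 2) <= cos a * cos h.
  by rewrite ler_pM2l // cos_ge_1_sub_sqr_half.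
have s4 : cos a * h ^+ 2 <= cos a * (eps * a ^+ 2) by rewrite ler_pM2l.
nra.
Qed.

End RealInequalities.

(** * Hyperbolic functions *)

Section Hyperbolic.
Variable R : realType.
Implicit Types a c d h x y eps : R.

Definition cosh x := (expR x + expR (- x)) / 2.
Definition sinh x := (expR x - expR (- x)) / 2.

Lemma mul_expRN x : expR x * expR (- x) = 1.
Proof. by rewrite -expRD subrr expR0. Qed.

Lemma cosh2_sub_sinh2 x : cosh x ^+ 2 - sinh x ^+ 2 = 1.
Proof. by rewrite /cosh /sinh; have := mul_expRN x; nra. Qed.

Lemma coshD x y : cosh (x + y) = cosh x * cosh y + sinh x * sinh y.
Proof. by rewrite /cosh /sinh opprD !expRD; field. Qed.

Lemma sinhD x y : sinh (x + y) = sinh x * cosh y + cosh x * sinh y.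
Proof. by rewrite /cosh /sinh opprD !expRD; field. Qed.

Lemma coshN x : cosh (- x) = cosh x.
Proof. by rewrite /cosh opprK addrC. Qed.

Lemma sinhN x : sinh (- x) = - sinh x.
Proof. by rewrite /sinh opprK; field. Qed.

Lemma cosh0 : cosh 0 = 1 :> R.
Proof. by rewrite /cosh oppr0 expR0; lra. Qed.

Lemma cosh_norm x : cosh `|x| = cosh x.
Proof. by have [x0|x0] := lerP 0 x; [rewrite ger0_norm | rewrite ltr0_norm // coshN]. Qed.

Lemma sinh_gt0 x : 0 < x -> 0 < sinh x.
Proof. by move=> x0; rewrite /sinh divr_gt0 // subr_gt0 ltr_expR; lra. Qed.

Lemma sinh_ge0 x : 0 <= x -> 0 <= sinh x.
Proof. by move=> x0; rewrite /sinh divr_ge0 // subr_ge0 ler_expR; lra. Qed.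

Lemma cosh_ge1 x : 1 <= cosh x.
Proof.
have := cosh2_sub_sinh2 x.
have : 0 <= cosh x by rewrite /cosh divr_ge0 // addr_ge0 // expR_ge0.
nra.
Qed.

Lemma ltr_cosh x y : 0 <= x -> x < y -> cosh x < cosh y.
Proof.
move=> x0 xy; rewrite -(subrK x y) coshD.
have s0 := sinh_ge0 x0.
have s1 : 0 < sinh (y - x) by rewrite sinh_gt0 // subr_gt0.
have c1 := cosh_ge1 x.
have c2 : 1 < cosh (y - x) by have := cosh2_sub_sinh2 (y - x); have := cosh_ge1 (y - x); nra.
nra.
Qed.

Lemma ler_cosh x y : 0 <= x -> 0 <= y -> (cosh x <= cosh y) = (x <= y).
Proof.
move=> x0 y0; apply/idP/idP; last first.
  by rewrite le_eqVlt => /orP[/eqP->//|/(ltr_cosh x0)/ltW].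
by apply: contraTT; rewrite -!ltNge => /(ltr_cosh y0).
Qed.

Lemma arcosh_ge0 x : 1 <= x -> 0 <= arcosh x.
Proof.
move=> x1; apply: ln_ge0; rewrite ler_wpDr // sqrtr_ge0.
Qed.

Lemma arcoshK x : 1 <= x -> cosh (arcosh x) = x.
Proof.
move=> x1; rewrite /arcosh; set s := Num.sqrt (x ^+ 2 - 1).
have s0 : 0 <= s by apply: sqrtr_ge0.
have ss : s ^+ 2 = x ^+ 2 - 1 by rewrite sqr_sqrtr // subr_ge0; nra.
have xs0 : 0 < x + s by lra.
have xsV : (x + s)^-1 = x - s.
  by apply: (@mulfI _ (x + s)); rewrite ?gt_eqF // mulfV ?gt_eqF //; nra.
by rewrite /cosh lnK ?posrE // expRN lnK ?posrE // xsV; lra.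
Qed.

Lemma cosh_sub1_le_sqr h : 0 <= h <= 1 / 2 -> cosh h - 1 <= h ^+ 2.
Proof.
move=> /andP[h0 h1]; set u := h / 2.
have -> : h = 2 * u by rewrite /u; field.
have u0 : 0 <= u by rewrite /u divr_ge0.
have u1 : u <= 1 / 4 by rewrite /u; lra.
have -> : cosh (2 * u) - 1 = (expR u - expR (- u)) ^+ 2 / 2.
  have E2 v : expR (2 * v) = expR v ^+ 2 by rewrite expr2 -expRD; congr expR; ring.
  rewrite /cosh -mulrN E2 E2; have := mul_expRN u; nra.
(* [e^u <= 1 / (1 - u)] gives [e^u - e^-u <= 7 u / 3] for [u <= 1/4]. *)
have XY := mul_expRN u; have X1 := expR_ge1Dx u; have Y1 := expR_ge1Dx (- u).
set X := expR u in XY X1 *; set Y := expR (- u) in XY Y1 *.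
have XU : X * (1 - u) <= 1 by nra.
have D0 : 0 <= X - Y by nra.
have D1 : (X - Y) * (1 - u) <= u * (2 - u) by nra.
have D2 : X - Y <= 7 / 3 * u.
  have : u * (2 - u) <= 7 / 3 * u * (1 - u) by nra.
  nra.
nra.
Qed.

Lemma cosh_ge_tangent a d : 0 <= d -> cosh a + d * sinh a <= cosh (a + d).
Proof.
move=> d0; rewrite /cosh /sinh opprD !expRD.
have := expR_ge1Dx d; have := expR_ge1Dx (- d).
have := expR_gt0 a; have := expR_gt0 (- a).
nra.
Qed.

Lemma mul_cosh_le_expR_sinh a : 0 <= a -> a * cosh a <= expR a * sinh a.
Proof.
move=> a0; rewrite /cosh /sinh.
have XY := mul_expRN a; have X1 := expR_ge1Dx a; have Y0 := expR_gt0 (- a).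
set X := expR a in XY X1 *; set Y := expR (- a) in XY Y0 *.
have Y1 : Y <= 1 by nra.
nra.
Qed.

Lemma double_le_expR a : 2 * a <= expR a.
Proof.
have -> : expR a = expR (a / 2) ^+ 2 by rewrite expr2 -expRD -splitr.
have := expR_ge1Dx (a / 2); have := expR_gt0 (a / 2).
set X := expR (a / 2) => X0 X1.
have [a2|a2] := lerP 0 (1 + a / 2); last by nra.
have : (1 + a / 2) ^+ 2 <= X ^+ 2 by rewrite ler_pXn2r // nnegrE ltW.
have := sqr_ge0 (1 - a / 2); nra.
Qed.

Lemma sinh_ln1D e : 0 < e -> sinh (ln (1 + e)) <= e.
Proof.
move=> e0; have e1 : 0 < 1 + e by lra.
rewrite /sinh expRN lnK ?posrE // ler_pdivrMr //.
have : (1 + e)^-1 * (1 + e) = 1 by rewrite mulVf // gt_eqF.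
have : 0 < (1 + e)^-1 by rewrite invr_gt0.
nra.
Qed.

Lemma hypotenuseH_le a h c eps D : 0 <= a <= D -> 0 <= h -> 0 <= c -> 0 < eps ->
  h ^+ 2 <= eps * a ^+ 2 -> cosh c = cosh a * cosh h -> c <= (1 + expR D * eps) * a.
Proof.
move=> /andP[a0 aD] h0 c0 e0 ha ca.
(* It suffices that [c <= a + e^a h^2 / a].  If [a <= e^a h] this follows from
   [c <= a + h]; otherwise [h <= 1/2] and a second-order estimate applies. *)
have [a_eq0|an0] := eqVneq a 0.
  have h_eq0 : h = 0 by move: ha; rewrite a_eq0; nra.
  by rewrite a_eq0 mulr0 -(ler_cosh c0) // ca a_eq0 h_eq0 cosh0 mulr1.
have apos : 0 < a by rewrite lt0r an0.
set K := expR a; have K0 : 0 < K := expR_gt0 a.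
set r := K * h ^+ 2 / a.
have r0 : 0 <= r by rewrite /r divr_ge0 // mulr_ge0 // ?sqr_ge0 // ltW.
have ra : r * a = K * h ^+ 2 by rewrite /r divfK.
suff car : c <= a + r.
  apply: le_trans car _; rewrite mulrDl mul1r lerD2l.
  rewrite -(ler_pM2r apos) ra.
  have : K * h ^+ 2 <= expR D * (eps * a ^+ 2).
    by apply: ler_pM; rewrite ?expR_ge0 ?sqr_ge0 // ler_expR.
  lra.
have [Kh|Kh] := lerP a (K * h).
  have cah : c <= a + h.
    rewrite -(ler_cosh c0) ?addr_ge0 // ca coshD.
    have := sinh_ge0 a0; have := sinh_ge0 h0; nra.
  suff : h <= r by lra.
  by rewrite -(ler_pM2r apos) ra; nra.
have h12 : h <= 1 / 2.
  have := double_le_expR a; rewrite -/K => Ka.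
  have : K * (2 * h) < K * 1 by nra.
  by rewrite ltr_pM2l //; lra.
have ch1 : cosh h - 1 <= h ^+ 2 by apply: cosh_sub1_le_sqr; rewrite h0.
rewrite -(ler_cosh c0) ?addr_ge0 //; apply: le_trans (cosh_ge_tangent a r0).
have ach := mul_cosh_le_expR_sinh a0; rewrite -/K in ach.
have sa0 := sinh_ge0 a0; have cha := cosh_ge1 a.
have s2 : (cosh a * h ^+ 2) * a <= (r * sinh a) * a.
  by rewrite [r * _ * _]mulrAC ra; have := sqr_ge0 h; nra.
rewrite ler_pM2r // in s2.
rewrite ca; nra.
Qed.

End Hyperbolic.

(** * Symmetric bilinear forms *)

Section SymmetricForm.
Variables (R : realType) (n : nat) (B : 'rV[R]_n -> 'rV[R]_n -> R).
Hypothesis formDl : forall a u v w, B (a *: u + v) w = a * B u w + B v w.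
Hypothesis formC : forall u v, B u v = B v u.

Lemma formD u v w : B (u + v) w = B u w + B v w.
Proof. by have := formDl 1 u v w; rewrite scale1r mul1r. Qed.

Lemma form0 w : B 0 w = 0.
Proof. by have := formD 0 0 w; rewrite addr0; lra. Qed.

Lemma formZ a u w : B (a *: u) w = a * B u w.
Proof. by rewrite -[a *: u]addr0 formDl form0 addr0. Qed.

Lemma formB u v w : B (u - v) w = B u w - B v w.
Proof. by rewrite formD -scaleN1r formZ mulN1r. Qed.

Lemma formr_comb3 a b c x u v w :
  B x (a *: u - b *: v - c *: w) = a * B x u - b * B x v - c * B x w.
Proof. by rewrite formC !formB !formZ [B u x]formC [B v x]formC [B w x]formC. Qed.

Lemma form_comb2 a b u v :
  B (a *: u - b *: v) (a *: u - b *: v) =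
  a ^+ 2 * B u u + b ^+ 2 * B v v - 2 * a * b * B u v.
Proof.
rewrite !formB !formZ [B u (_ - _)]formC [B v (_ - _)]formC !formB !formZ.
by rewrite [B v u]formC; ring.
Qed.

Lemma form_comb3 a b c u v w :
  B (a *: u - b *: v - c *: w) (a *: u - b *: v - c *: w) =
  a ^+ 2 * B u u + b ^+ 2 * B v v + c ^+ 2 * B w w
  - 2 * a * b * B u v - 2 * a * c * B u w + 2 * b * c * B v w.
Proof.
rewrite formB !formr_comb3 !formB !formZ.
by rewrite [B v u]formC [B w u]formC [B w v]formC; ring.
Qed.

Lemma formBB u v : B (u - v) (u - v) = B u u + B v v - 2 * B u v.
Proof. by have := form_comb2 1 1 u v; rewrite !scale1r => ->; ring. Qed.

Lemma formDD u v : B (u + v) (u + v) = B u u + B v v + 2 * B u v.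
Proof. by rewrite !formD [B u (_ + _)]formC [B v (_ + _)]formC !formD [B v u]formC; ring. Qed.

End SymmetricForm.

Section ConcreteForms.
Variable R : realType.

Lemma dotEDl n (a : R) (u v w : 'rV[R]_n) : dotE (a *: u + v) w = a * dotE u w + dotE v w.
Proof. by rewrite /dotE mulr_sumr -big_split; apply: eq_bigr => i _; rewrite !mxE mulrDl mulrA. Qed.

Lemma dotEC n (u v : 'rV[R]_n) : dotE u v = dotE v u.
Proof. by rewrite /dotE; apply: eq_bigr => i _; rewrite mulrC. Qed.

Lemma dotE_ge0 n (u : 'rV[R]_n) : 0 <= dotE u u.
Proof. by rewrite /dotE sumr_ge0 // => i _; rewrite -expr2 sqr_ge0. Qed.

Lemma dotE_eq0 n (u : 'rV[R]_n) : dotE u u = 0 -> u = 0.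
Proof.
move=> /eqP; rewrite /dotE psumr_eq0 => [/allP u0|i _]; last by rewrite -expr2 sqr_ge0.
apply/rowP => i; have := u0 i (mem_index_enum i).
by rewrite implyTb mulf_eq0 orbb mxE => /eqP.
Qed.

Lemma minkowskiDl n (a : R) (u v w : 'rV[R]_n.+1) :
  minkowski (a *: u + v) w = a * minkowski u w + minkowski v w.
Proof.
rewrite /minkowski.
have -> : \sum_(i < n) (a *: u + v) 0 (lift ord0 i) * w 0 (lift ord0 i) =
    a * \sum_(i < n) u 0 (lift ord0 i) * w 0 (lift ord0 i)
  + \sum_(i < n) v 0 (lift ord0 i) * w 0 (lift ord0 i).
  by rewrite mulr_sumr -big_split; apply: eq_bigr => i _; rewrite !mxE mulrDl mulrA.
by rewrite !mxE; ring.
Qed.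

Lemma minkowskiC n (u v : 'rV[R]_n.+1) : minkowski u v = minkowski v u.
Proof.
by rewrite /minkowski mulrC; congr (_ + _); apply: eq_bigr => i _; rewrite mulrC.
Qed.

Lemma sumr_sqr_eq0 n (a : 'I_n -> R) : \sum_(i < n) a i ^+ 2 = 0 -> forall i, a i = 0.
Proof.
move=> /eqP; rewrite psumr_eq0 => [/allP a0 i|i _]; last exact: sqr_ge0.
by apply/eqP; rewrite -sqrf_eq0; have := a0 i (mem_index_enum i); rewrite implyTb.
Qed.

Lemma cauchy_schwarz_sum n (a b : 'I_n -> R) :
  (\sum_(i < n) a i * b i) ^+ 2 <= (\sum_(i < n) a i ^+ 2) * (\sum_(i < n) b i ^+ 2).
Proof.
set A := \sum_(i < n) a i ^+ 2; set B := \sum_(i < n) b i ^+ 2.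
set C := \sum_(i < n) a i * b i.
have B0 : 0 <= B by rewrite sumr_ge0 // => i _; rewrite sqr_ge0.
have [B_eq0|Bn0] := eqVneq B 0.
  have b0 := sumr_sqr_eq0 B_eq0.
  by rewrite B_eq0 /C big1 ?expr0n ?mulr0 // => i _; rewrite b0 mulr0.
have Bp : 0 < B by rewrite lt0r Bn0.
have : 0 <= \sum_(i < n) (B * a i - C * b i) ^+ 2 by rewrite sumr_ge0 // => i _; rewrite sqr_ge0.
have -> : \sum_(i < n) (B * a i - C * b i) ^+ 2 = B * (A * B - C ^+ 2).
  rewrite (eq_bigr (fun i => B ^+ 2 * a i ^+ 2 - (2 * B * C) * (a i * b i)
    + C ^+ 2 * b i ^+ 2)) => [|i _]; last by ring.
  by rewrite big_split big_split /= sumrN -!mulr_sumr -/A -/B -/C; ring.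
by rewrite pmulr_rge0 // subr_ge0.
Qed.

Lemma sum_spatial_sqr n (u : 'rV[R]_n.+1) :
  \sum_(i < n) u 0 (lift ord0 i) ^+ 2 = minkowski u u + u 0 ord0 ^+ 2.
Proof. by rewrite /minkowski (eq_bigr _ (fun i _ => expr2 _)) expr2; ring. Qed.

Lemma minkowski_le_neg1 n (u v : 'rV[R]_n.+1) : ptH u -> ptH v -> minkowski u v <= -1.
Proof.
move=> [uu u0] [vv v0].
have := cauchy_schwarz_sum (fun i => u 0 (lift ord0 i)) (fun i => v 0 (lift ord0 i)).
rewrite !sum_spatial_sqr uu vv.
have := sum_spatial_sqr u; have := sum_spatial_sqr v; rewrite uu vv.
have Su0 : 0 <= \sum_(i < n) u 0 (lift ord0 i) ^+ 2 by rewrite sumr_ge0 // => i _; rewrite sqr_ge0.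
have Sv0 : 0 <= \sum_(i < n) v 0 (lift ord0 i) ^+ 2 by rewrite sumr_ge0 // => i _; rewrite sqr_ge0.
rewrite /minkowski; set P := \sum_(i < n) _ * _ => Sv Su cs.
have u1 : 1 <= u 0 ord0 by nra.
have v1 : 1 <= v 0 ord0 by nra.
have P2 : P ^+ 2 <= (u 0 ord0 * v 0 ord0 - 1) ^+ 2.
  apply: le_trans cs _; have := sqr_ge0 (u 0 ord0 - v 0 ord0); nra.
have : P <= u 0 ord0 * v 0 ord0 - 1 by apply: le_of_sqr_le P2; nra.
lra.
Qed.

Lemma minkowski_orth_eq0 n (v w : 'rV[R]_n.+1) :
  minkowski w w = -1 -> minkowski v w = 0 -> minkowski v v = 0 -> v = 0.
Proof.
move=> ww vw vv.
have := cauchy_schwarz_sum (fun i => v 0 (lift ord0 i)) (fun i => w 0 (lift ord0 i)).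
rewrite !sum_spatial_sqr ww vv add0r.
have -> : \sum_(i < n) v 0 (lift ord0 i) * w 0 (lift ord0 i) = v 0 ord0 * w 0 ord0.
  by move: vw; rewrite /minkowski; lra.
move=> cs; have v0 : v 0 ord0 = 0.
  by apply/eqP; rewrite -sqrf_eq0 eq_le sqr_ge0 andbT; nra.
have := sum_spatial_sqr v; rewrite vv v0 expr0n addr0 => /sumr_sqr_eq0 vs0.
by apply/rowP => i; rewrite mxE; case: (unliftP ord0 i) => [j ->|->].
Qed.

End ConcreteForms.

(** * Shortest segments *)

Lemma interior_step (R : realType) (t0 L e : R) : 0 < t0 < L -> 0 < e ->
  exists2 s, 0 < s < e & 0 <= t0 - s /\ t0 + s <= L.
Proof.
move=> /andP[t00 t0L] e0; set m := Num.min e (Num.min t0 (L - t0)).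
have m0 : 0 < m by rewrite !lt_min e0 t00 subr_gt0.
have me : m <= e by rewrite ge_min lexx.
have mt : m <= t0 by rewrite !ge_min lexx orbT.
have mL : m <= L - t0 by rewrite !ge_min lexx !orbT.
by exists (m / 2); [apply/andP; split | split]; lra.
Qed.

Section Segment.
Variables (R : realType) (T : Type) (P : T -> Prop) (dist : T -> T -> R).
Variables (p q : T) (g : R -> T).
Hypothesis seg : shortest_segment P dist p q g.
Local Notation L := (dist p q).

Lemma segment_dist_start t : 0 <= t <= L -> dist p (g t) = t.
Proof.
move=> /andP[t0 tL]; have [g0 [_ [_ iso]]] := seg.
by rewrite -{1}g0 iso ?lexx ?t0 ?(le_trans t0 tL) // sub0r normrN ger0_norm.
Qed.

Lemma segment_dist_end t : 0 <= t <= L -> dist q (g t) = L - t.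
Proof.
move=> /andP[t0 tL]; have [_ [gL [_ iso]]] := seg.
by rewrite -{1}gL iso ?lexx ?t0 ?(le_trans t0 tL) // ger0_norm // subr_ge0.
Qed.

Variables (x y : T).
Hypothesis closest : closest_on_segment dist p q g x y.
Hypothesis distC : forall u v, dist u v = dist v u.
Hypothesis dist_xy_ge0 : 0 <= dist x y.
Hypothesis dist_xy_eq0 : dist x y = 0 -> x = y.

(* If [x = y] the detour is trivial; otherwise the hypothesis on [|xy|] forces
   [y] into the interior of the segment. *)
Lemma segment_detour_le (eps k : R) : 0 <= eps -> 1 <= k ->
  (forall t0, 0 < t0 < L -> y = g t0 ->
     (forall t, 0 <= t <= L -> dist x y <= dist x (g t)) ->
     dist x y ^+ 2 <= eps * t0 ^+ 2 -> dist x y ^+ 2 <= eps * (L - t0) ^+ 2 ->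
     dist p x + dist x q <= k * L) ->
  dist x y <= Num.sqrt eps * Num.min (dist p y) (dist q y) ->
  dist p x + dist x q <= k * L.
Proof.
move=> e0 k1 interior; have [t0 [t0I [yE ymin]]] := closest.
have /andP[t00 t0L] := t0I.
rewrite yE segment_dist_start // segment_dist_end // -yE => h_min.
have se0 := sqrtr_ge0 eps.
have ht0 : dist x y <= Num.sqrt eps * t0.
  by apply: le_trans h_min _; rewrite ler_wpM2l // ge_min lexx.
have hLt0 : dist x y <= Num.sqrt eps * (L - t0).
  by apply: le_trans h_min _; rewrite ler_wpM2l // ge_min lexx orbT.
have L0 : 0 <= L := le_trans t00 t0L.
have [/dist_xy_eq0 xy|hn0] := eqVneq (dist x y) 0.
  rewrite xy yE segment_dist_start // distC segment_dist_end // addrC subrK.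
  by rewrite ler_peMl.
have pos a : 0 <= a -> dist x y <= Num.sqrt eps * a -> 0 < a.
  rewrite le_eqVlt => /orP[/eqP <-|//]; rewrite mulr0 => h0.
  by move: hn0; rewrite eq_le h0 dist_xy_ge0.
apply: (interior t0) => //.
- rewrite (pos _ t00 ht0) -subr_gt0 /=.
  by apply: pos hLt0; rewrite subr_ge0.
- exact: sqr_le_of_le_sqrtM.
- by apply: sqr_le_of_le_sqrtM; rewrite // subr_ge0.
Qed.

End Segment.

(** * Euclidean space *)

Section Euclidean.
Variables (R : realType) (d : nat).
Implicit Types u v x : 'rV[R]_d.

Local Notation dotEDl := (@dotEDl R d).
Local Notation dotEC := (@dotEC R d).

Lemma distE_ge0 u v : 0 <= distE u v.
Proof. exact: sqrtr_ge0. Qed.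

Lemma distE_sqr u v : distE u v ^+ 2 = dotE (u - v) (u - v).
Proof. by rewrite sqr_sqrtr // dotE_ge0. Qed.

Lemma distEC u v : distE u v = distE v u.
Proof.
by rewrite /distE /dotE -opprB; congr Num.sqrt; apply: eq_bigr => i _; rewrite !mxE mulrNN.
Qed.

Lemma distE_eq0 u v : distE u v = 0 -> u = v.
Proof. by move=> uv; apply/subr0_eq/dotE_eq0; rewrite -distE_sqr uv expr0n. Qed.

Variables (p q : 'rV[R]_d) (g : R -> 'rV[R]_d).
Hypothesis seg : shortest_segment (@ptE R d) (@distE R d) p q g.
Local Notation L := (distE p q).

Lemma segmentE_affine t : 0 < L -> 0 <= t <= L -> g t = p + (t / L) *: (q - p).
Proof.
move=> L0 tI; have [g0 [gL _]] := seg.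
suff : L *: (g t - p) = t *: (q - p).
  move=> /(congr1 (fun v => L^-1 *: v)); rewrite !scalerA mulVf ?gt_eqF // scale1r.
  by move=> E; rewrite [t / L]mulrC -E addrC subrK.
apply/subr0_eq/dotE_eq0; rewrite (form_comb2 dotEDl dotEC).
have tp : dotE (g t - p) (g t - p) = t ^+ 2.
  by rewrite -distE_sqr distEC (segment_dist_start seg).
have qp : dotE (q - p) (q - p) = L ^+ 2 by rewrite -distE_sqr distEC.
have tq : dotE (g t - q) (g t - q) = (L - t) ^+ 2.
  by rewrite -distE_sqr distEC (segment_dist_end seg).
have : g t - q = (g t - p) - (q - p) by rewrite opprB addrA subrK.
move=> gq; rewrite gq (formBB dotEDl dotEC) tp qp in tq.
have -> : dotE (g t - p) (q - p) = t * L by lra.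
by rewrite tp qp; ring.
Qed.

Lemma distE_segment_sqr x t : 0 < L -> 0 <= t <= L ->
  distE x (g t) ^+ 2 = distE x p ^+ 2 - 2 * t * (dotE (x - p) (q - p) / L) + t ^+ 2.
Proof.
move=> L0 tI; rewrite distE_sqr.
have -> : x - g t = 1 *: (x - p) - (t / L) *: (q - p).
  by rewrite segmentE_affine // scale1r opprD addrA.
rewrite (form_comb2 dotEDl dotEC) -!distE_sqr [distE q p]distEC.
by field; rewrite gt_eqF.
Qed.

Lemma euclidean_pythagoras x t0 : 0 < t0 < L ->
  (forall t, 0 <= t <= L -> distE x (g t0) <= distE x (g t)) ->
  distE p x ^+ 2 = t0 ^+ 2 + distE x (g t0) ^+ 2 /\
  distE x q ^+ 2 = (L - t0) ^+ 2 + distE x (g t0) ^+ 2.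
Proof.
move=> t0I ymin; have /andP[t00 t0L] := t0I; have L0 := lt_trans t00 t0L.
have [_ [gL _]] := seg.
set c := dotE (x - p) (q - p) / L.
have phi t : 0 <= t <= L -> distE x (g t) ^+ 2 = distE x p ^+ 2 - 2 * t * c + t ^+ 2.
  exact: distE_segment_sqr.
have t0I' : 0 <= t0 <= L by rewrite !ltW.
have step s : 0 <= t0 + s <= L -> s * (c - t0) <= 1 / 2 * s ^+ 2.
  move=> sI; have := ymin _ sI.
  rewrite -(ler_pXn2r (n := 2)) ?nnegrE ?distE_ge0 // !phi //; lra.
have ct : c = t0.
  apply/subr0_eq/(eq0_of_mul_le_sqr (K := 1 / 2)) => [e e0|e e0];
    have [s /andP[s0 se] [ts tsL]] := interior_step t0I e0.
  - by exists s; [rewrite s0 | apply: step; apply/andP; split; lra].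
  - by exists (- s); [rewrite ltrN2 se oppr_lt0 s0 | apply: step; apply/andP; split; lra].
split; first by rewrite distEC phi // ct; ring.
by rewrite -{1}gL !phi ?lexx ?ltW // ct; ring.
Qed.

Lemma euclidean_detour_le x y eps :
  closest_on_segment (@distE R d) p q g x y -> 0 <= eps ->
  distE x y <= Num.sqrt eps * Num.min (distE p y) (distE q y) ->
  distE p x + distE x q <= (1 + eps) * L.
Proof.
move=> cl e0; apply: (segment_detour_le seg cl) => //.
- exact: distEC.
- exact: distE_ge0.
- exact: distE_eq0.
- by rewrite lerDl.
move=> t0 t0I -> ymin ht0 hLt0; have [px xq] := euclidean_pythagoras t0I ymin.
have /andP[t00 t0L] := t0I.
have := hypotenuseE_le (ltW t00) e0 ht0 px.
have := hypotenuseE_le _ e0 hLt0 xq; rewrite subr_ge0 ltW // => /(_ isT).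
lra.
Qed.

End Euclidean.

(** * The sphere *)

Lemma sphere_first_order (R : realType) (A t0 L : R) (f : R -> R) :
  0 < t0 < L -> L <= pi -> A <= 1 ->
  (forall t, 0 <= t <= L -> f t <= A) ->
  (forall t, 0 <= t <= L -> sin t0 * f t = sin t * A - sin (t - t0) * f 0) ->
  forall t, 0 <= t <= L -> f t = cos (t - t0) * A.
Proof.
move=> t0I Lpi A1 fA rel; have /andP[t00 t0L] := t0I.
have pi0 := pi_gt0 R; have pi2 := pihalf_ge1 R.
have st0 : 0 < sin t0 by apply: sin_gt0_pi; rewrite t00; lra.
have st1 := sin_le1 t0.
set D := cos t0 * A - f 0.
(* [sin t0 * f (t0 + s) = sin t0 * cos s * A + sin s * D], and [f] is maximal at [t0]. *)
have step s : 0 <= t0 + s <= L -> -1 <= s <= 1 -> sin s * D <= 1 * sin s ^+ 2.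
  move=> sI /andP[s1 s2]; have := rel _ sI; have := fA _ sI.
  rewrite (addrC t0) addrK sinD => fs E.
  have cs0 : 0 <= cos s by apply: cos_ge0_pihalf; apply/andP; split; lra.
  have cs1 := cos_le1 s.
  have -> : sin s * D = sin t0 * (f (s + t0) - cos s * A) by rewrite /D; lra.
  have : sin t0 * A <= 1 by nra.
  rewrite mul1r sin2cos2; nra.
have small e : 0 < e -> exists2 s, 0 < sin s < e & [/\ 0 < s, s <= 1, 0 <= t0 - s & t0 + s <= L].
  move=> e0; have e10 : 0 < Num.min e 1 by rewrite lt_min e0 ltr01.
  have [s /andP[s0 se] [ts tsL]] := interior_step t0I e10.
  move: se; rewrite lt_min => /andP[se s1].
  have ss : 0 < sin s by apply: sin_gt0_pihalf; apply/andP; split; lra.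
  exists s; last by split => //; exact: ltW.
  by rewrite ss /=; have := sin_le_id (ltW s0); lra.
have D0 : D = 0.
  apply: (eq0_of_mul_le_sqr (K := 1)) => e /small [s /andP[ss se] [s0 s1 ts tsL]].
  - by exists (sin s); [rewrite ss | apply: step; apply/andP; split; lra].
  - exists (sin (- s)); rewrite sinN; first by apply/andP; split; lra.
    by rewrite -sinN; apply: step; apply/andP; split; lra.
move=> t tI; apply: (@mulfI _ (sin t0)); first by rewrite gt_eqF.
rewrite rel //.
have -> : f 0 = cos t0 * A by move: D0; rewrite /D; lra.
by rewrite -{1}(subrK t0 t) sinD; ring.
Qed.

Lemma sin_comb3_eq0 (R : realType) (a b : R) :
  sin (a + b) ^+ 2 + sin b ^+ 2 + sin a ^+ 2 - 2 * sin (a + b) * sin b * cos a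
  - 2 * sin (a + b) * sin a * cos b + 2 * sin b * sin a * cos (a + b) = 0.
Proof.
rewrite sinD cosD; have := cos2Dsin2 a; have := cos2Dsin2 b.
set Sa := sin a; set Ca := cos a; set Sb := sin b; set Cb := cos b => Eb Ea.
have -> : (Sa * Cb + Ca * Sb) ^+ 2 + Sb ^+ 2 + Sa ^+ 2 - 2 * (Sa * Cb + Ca * Sb) * Sb * Ca
  - 2 * (Sa * Cb + Ca * Sb) * Sa * Cb + 2 * Sb * Sa * (Ca * Cb - Sa * Sb) =
  Sa ^+ 2 * (1 - (Cb ^+ 2 + Sb ^+ 2)) + Sb ^+ 2 * (1 - (Ca ^+ 2 + Sa ^+ 2)) by ring.
by rewrite Ea Eb subrr !mulr0 addr0.
Qed.

Section Sphere.
Variables (R : realType) (d : nat).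
Implicit Types u v x : 'rV[R]_d.+1.

Local Notation dotEDl := (@dotEDl R d.+1).
Local Notation dotEC := (@dotEC R d.+1).

Lemma dotE_sphere_itv u v : ptS u -> ptS v -> -1 <= dotE u v <= 1.
Proof.
move=> uu vv; have := dotE_ge0 (u - v); have := dotE_ge0 (u + v).
rewrite (formBB dotEDl dotEC) (formDD dotEDl dotEC) uu vv.
by move=> ? ?; apply/andP; split; lra.
Qed.

Lemma cos_distS u v : ptS u -> ptS v -> cos (distS u v) = dotE u v.
Proof. by move=> uu vv; rewrite /distS acosK // in_itv /= dotE_sphere_itv. Qed.

Lemma distS_itv u v : ptS u -> ptS v -> 0 <= distS u v <= pi.
Proof. by move=> uu vv; have ? := dotE_sphere_itv uu vv; rewrite acos_ge0 // acos_lepi. Qed.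

Lemma distSC u v : distS u v = distS v u.
Proof. by rewrite /distS dotEC. Qed.

Lemma distS_eq0 u v : ptS u -> ptS v -> distS u v = 0 -> u = v.
Proof.
move=> uu vv uv0; apply/subr0_eq/dotE_eq0.
by rewrite (formBB dotEDl dotEC) uu vv -cos_distS // uv0 cos0; ring.
Qed.

Variables (p q : 'rV[R]_d.+1) (g : R -> 'rV[R]_d.+1).
Hypothesis seg : shortest_segment (@ptS R d) (@distS R d) p q g.
Local Notation L := (distS p q).

Lemma sphere_segment_gram s t : 0 <= s <= L -> 0 <= t <= L ->
  dotE (g s) (g t) = cos (s - t).
Proof.
have [_ [_ [gS iso]]] := seg => sI tI.
by rewrite -(cos_distS (gS s sI) (gS t tI)) iso // cos_norm.
Qed.

Lemma sphere_segment_relation t0 t : 0 <= t0 <= L -> 0 <= t <= L ->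
  sin t *: g t0 - sin (t - t0) *: p - sin t0 *: g t = 0.
Proof.
move=> t0I tI; have [g0 _] := seg; have /andP[t00 t0L] := t0I.
have I0 : (0 : R) <= 0 <= L by rewrite lexx (le_trans t00 t0L).
apply: dotE_eq0; rewrite (form_comb3 dotEDl dotEC) -g0 !sphere_segment_gram //.
rewrite !subrr sub0r subr0 cos0 !mulr1 -[t0 - t]opprB !cosN.
by move: (sin_comb3_eq0 t0 (t - t0)); rewrite (addrC t0) subrK.
Qed.

Lemma sphere_segment_pt t : 0 <= t <= L -> ptS (g t).
Proof. by have [_ [_ [gS _]]] := seg; apply: gS. Qed.

Lemma sphere_pythagoras x t0 : ptS x -> 0 < t0 < L ->
  (forall t, 0 <= t <= L -> distS x (g t0) <= distS x (g t)) ->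
  cos (distS p x) = cos t0 * cos (distS x (g t0)) /\
  cos (distS x q) = cos (L - t0) * cos (distS x (g t0)).
Proof.
move=> xS t0I ymin; have [g0 [gL _]] := seg; have /andP[t00 t0L] := t0I.
have I0 : (0 : R) <= 0 <= L by rewrite lexx (le_trans (ltW t00) (ltW t0L)).
have IL : 0 <= L <= L by rewrite lexx (le_trans (ltW t00) (ltW t0L)).
have It0 : 0 <= t0 <= L by rewrite !ltW.
have pS : ptS p by rewrite -g0; apply: sphere_segment_pt.
have qS : ptS q by rewrite -gL; apply: sphere_segment_pt.
have inner : forall t, 0 <= t <= L -> dotE x (g t) = cos (t - t0) * dotE x (g t0).
  apply: (sphere_first_order (f := fun t => dotE x (g t))) => //.
  - by have /andP[] := distS_itv pS qS.
  - by have /andP[] := dotE_sphere_itv xS (sphere_segment_pt It0).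
  - move=> t tI; have tS := sphere_segment_pt tI; have t0S := sphere_segment_pt It0.
    have /andP[? ?] := distS_itv xS tS; have /andP[? ?] := distS_itv xS t0S.
    by rewrite /= -!cos_distS // ler_cos ?ymin // in_itv /=; apply/andP.
  - move=> t tI; have := congr1 (dotE x) (sphere_segment_relation It0 tI).
    by rewrite (formr_comb3 dotEDl dotEC) [dotE x 0]dotEC (form0 dotEDl) -g0 /=; lra.
have y_S := sphere_segment_pt It0.
split; first by rewrite cos_distS // dotEC -g0 inner // sub0r cosN cos_distS.
by rewrite (cos_distS xS qS) -[in dotE x q]gL inner // cos_distS.
Qed.

Lemma spherical_detour_le x y eps : ptS x ->
  closest_on_segment (@distS R d) p q g x y -> 0 < eps <= 1 ->
  distS x y <= Num.sqrt eps * Num.min (distS p y) (distS q y) ->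
  distS p x + distS x q <= (1 + eps) * L.
Proof.
move=> xS cl eI; have /andP[e0 _] := eI; have [t0 [t0I [yE _]]] := cl.
have yS : ptS y by rewrite yE; apply: sphere_segment_pt.
have [g0 [gL _]] := seg.
have L0 : 0 <= L by case/andP: t0I; apply: le_trans.
have pS : ptS p by rewrite -g0; apply: sphere_segment_pt; rewrite lexx L0.
have qS : ptS q by rewrite -gL; apply: sphere_segment_pt; rewrite lexx L0.
apply: (segment_detour_le seg cl) => //.
- exact: distSC.
- by have /andP[] := distS_itv xS yS.
- exact: distS_eq0.
- by rewrite ltW.
- by rewrite lerDl ltW.
move=> a aI -> ymin ha hb; have [px xq] := sphere_pythagoras xS aI ymin.
have /andP[a0 aL] := aI; have /andP[_ Lpi] := distS_itv pS qS.
have aI' : 0 <= a <= pi by apply/andP; split; lra.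
have bI : 0 <= L - a <= pi by apply/andP; split; lra.
have := hypotenuseS_le aI' (distS_itv pS xS) eI ha px.
have := hypotenuseS_le bI (distS_itv xS qS) eI hb xq.
lra.
Qed.

End Sphere.

(** * Hyperbolic space *)

Lemma hyperbolic_first_order (R : realType) (A t0 L : R) (f : R -> R) :
  0 < t0 < L -> 0 <= A ->
  (forall t, 0 <= t <= L -> A <= f t) ->
  (forall t, 0 <= t <= L -> sinh t0 * f t = sinh t * A - sinh (t - t0) * f 0) ->
  forall t, 0 <= t <= L -> f t = cosh (t - t0) * A.
Proof.
move=> t0I A0 fA rel; have /andP[t00 t0L] := t0I.
have st0 := sinh_gt0 t00.
set D := cosh t0 * A - f 0; set K := sinh t0 * A.
(* [sinh t0 * f (t0 + s) = K * cosh s + sinh s * D], and [f] is minimal at [t0]. *)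
have K0 : 0 <= K by rewrite mulr_ge0 // ltW.
have step s : 0 <= t0 + s <= L -> sinh s * (- D) <= K * sinh s ^+ 2.
  move=> sI; have := rel _ sI; have := fA _ sI.
  rewrite (addrC t0) addrK sinhD => fs E.
  have -> : sinh s * - D = sinh t0 * (cosh s * A - f (s + t0)) by rewrite /D; lra.
  have cs1 : cosh s - 1 <= sinh s ^+ 2.
    by have := cosh2_sub_sinh2 s; have := cosh_ge1 s; nra.
  have : sinh t0 * (cosh s * A - f (s + t0)) <= sinh t0 * (cosh s * A - A).
    by rewrite ler_pM2l // lerD2l lerN2.
  have : K * (cosh s - 1) <= K * sinh s ^+ 2 by rewrite ler_wpM2l.
  rewrite /K; lra.
have small e : 0 < e -> exists2 s, 0 < sinh s < e & [/\ 0 < s, 0 <= t0 - s & t0 + s <= L].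
  move=> e0; have [r /andP[r0 re] [tr trL]] := interior_step t0I e0.
  have lr0 : 0 < ln (1 + r) by apply: ln_gt0; lra.
  have lr : ln (1 + r) <= r by apply: le_ln1Dx; lra.
  exists (ln (1 + r)).
    by rewrite sinh_gt0 //= (le_lt_trans (sinh_ln1D r0)).
  by split => //; [apply: le_trans tr _ | apply: le_trans _ trL]; rewrite ?lerD2l ?lerN2.
have D0 : - D = 0.
  apply: (eq0_of_mul_le_sqr (K := K)) => e /small [s /andP[ss se] [s0 ts tsL]].
  - by exists (sinh s); [rewrite ss | apply: step; apply/andP; split; lra].
  - exists (sinh (- s)); rewrite sinhN; first by apply/andP; split; lra.
    by rewrite -sinhN; apply: step; apply/andP; split; lra.
move=> t tI; apply: (@mulfI _ (sinh t0)); first by rewrite gt_eqF.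
rewrite rel //.
have -> : f 0 = cosh t0 * A by move: D0; rewrite /D; lra.
by rewrite -{1}(subrK t0 t) sinhD; ring.
Qed.

Lemma sinh_comb3_eq0 (R : realType) (a b : R) :
  sinh (a + b) ^+ 2 + sinh b ^+ 2 + sinh a ^+ 2 - 2 * sinh (a + b) * sinh b * cosh a
  - 2 * sinh (a + b) * sinh a * cosh b + 2 * sinh b * sinh a * cosh (a + b) = 0.
Proof.
rewrite sinhD coshD; have := cosh2_sub_sinh2 a; have := cosh2_sub_sinh2 b.
set Sa := sinh a; set Ca := cosh a; set Sb := sinh b; set Cb := cosh b => Eb Ea.
have -> : (Sa * Cb + Ca * Sb) ^+ 2 + Sb ^+ 2 + Sa ^+ 2 - 2 * (Sa * Cb + Ca * Sb) * Sb * Ca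
  - 2 * (Sa * Cb + Ca * Sb) * Sa * Cb + 2 * Sb * Sa * (Ca * Cb + Sa * Sb) =
  Sa ^+ 2 * (1 - (Cb ^+ 2 - Sb ^+ 2)) + Sb ^+ 2 * (1 - (Ca ^+ 2 - Sa ^+ 2)) by ring.
by rewrite Ea Eb subrr !mulr0 addr0.
Qed.

Section HyperbolicSpace.
Variables (R : realType) (d : nat).
Implicit Types u v x : 'rV[R]_d.+1.

Local Notation minkowskiDl := (@minkowskiDl R d).
Local Notation minkowskiC := (@minkowskiC R d).

Lemma cosh_distH u v : ptH u -> ptH v -> cosh (distH u v) = - minkowski u v.
Proof. by move=> uH vH; rewrite arcoshK // lerNr minkowski_le_neg1. Qed.

Lemma distH_ge0 u v : ptH u -> ptH v -> 0 <= distH u v.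
Proof. by move=> uH vH; rewrite arcosh_ge0 // lerNr minkowski_le_neg1. Qed.

Lemma distHC u v : distH u v = distH v u.
Proof. by rewrite /distH minkowskiC. Qed.

Lemma distH_eq0 u v : ptH u -> ptH v -> distH u v = 0 -> u = v.
Proof.
move=> uH vH uv0; have uv : minkowski u v = -1.
  by apply/eqP; rewrite -eqr_opp opprK -cosh_distH // uv0 cosh0.
have [uu _] := uH; have [vv _] := vH.
apply/subr0_eq/(minkowski_orth_eq0 uu).
- by rewrite (formB minkowskiDl) uu minkowskiC uv subrr.
- by rewrite (formBB minkowskiDl minkowskiC) uu vv uv; lra.
Qed.

Variables (p q : 'rV[R]_d.+1) (g : R -> 'rV[R]_d.+1).
Hypothesis seg : shortest_segment (@ptH R d) (@distH R d) p q g.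
Local Notation L := (distH p q).

Lemma hyperbolic_segment_pt t : 0 <= t <= L -> ptH (g t).
Proof. by have [_ [_ [gH _]]] := seg; apply: gH. Qed.

Lemma hyperbolic_segment_gram s t : 0 <= s <= L -> 0 <= t <= L ->
  minkowski (g s) (g t) = - cosh (s - t).
Proof.
have [_ [_ [_ iso]]] := seg => sI tI.
have := cosh_distH (hyperbolic_segment_pt sI) (hyperbolic_segment_pt tI).
by rewrite iso // cosh_norm => ->; rewrite opprK.
Qed.

Lemma hyperbolic_segment_relation t0 t : 0 <= t0 <= L -> 0 <= t <= L ->
  sinh t *: g t0 - sinh (t - t0) *: p - sinh t0 *: g t = 0.
Proof.
move=> t0I tI; have [g0 _] := seg; have /andP[t00 t0L] := t0I.
have I0 : (0 : R) <= 0 <= L by rewrite lexx (le_trans t00 t0L).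
have [uu _] := hyperbolic_segment_pt t0I.
apply: (minkowski_orth_eq0 uu).
- rewrite minkowskiC (formr_comb3 minkowskiDl minkowskiC) -g0.
  rewrite !hyperbolic_segment_gram // subrr cosh0 subr0 -[t0 - t]opprB coshN.
  by rewrite -{1}(subrK t0 t) sinhD; ring.
- rewrite (form_comb3 minkowskiDl minkowskiC) -g0 !hyperbolic_segment_gram //.
  rewrite !subrr sub0r subr0 cosh0 -[t0 - t]opprB !coshN.
  move: (sinh_comb3_eq0 t0 (t - t0)); rewrite (addrC t0) subrK => E.
  by apply/eqP; rewrite -eqr_opp oppr0 -E; apply/eqP; ring.
Qed.

Lemma hyperbolic_pythagoras x t0 : ptH x -> 0 < t0 < L ->
  (forall t, 0 <= t <= L -> distH x (g t0) <= distH x (g t)) ->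
  cosh (distH p x) = cosh t0 * cosh (distH x (g t0)) /\
  cosh (distH x q) = cosh (L - t0) * cosh (distH x (g t0)).
Proof.
move=> xH t0I ymin; have [g0 [gL _]] := seg; have /andP[t00 t0L] := t0I.
have I0 : (0 : R) <= 0 <= L by rewrite lexx (le_trans (ltW t00) (ltW t0L)).
have IL : 0 <= L <= L by rewrite lexx (le_trans (ltW t00) (ltW t0L)).
have It0 : 0 <= t0 <= L by rewrite !ltW.
have pH : ptH p by rewrite -g0; apply: hyperbolic_segment_pt.
have qH : ptH q by rewrite -gL; apply: hyperbolic_segment_pt.
have y_H := hyperbolic_segment_pt It0.
have inner : forall t, 0 <= t <= L ->
    - minkowski x (g t) = cosh (t - t0) * - minkowski x (g t0).
  apply: (hyperbolic_first_order (f := fun t => - minkowski x (g t))) => //.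
  - by rewrite -cosh_distH // (le_trans ler01) ?cosh_ge1.
  - move=> t tI; have tH := hyperbolic_segment_pt tI.
    by rewrite /= -!cosh_distH // ler_cosh ?distH_ge0 ?ymin.
  - move=> t tI; have := congr1 (minkowski x) (hyperbolic_segment_relation It0 tI).
    rewrite (formr_comb3 minkowskiDl minkowskiC) [minkowski x 0]minkowskiC.
    by rewrite (form0 minkowskiDl) -g0 /=; lra.
split; first by rewrite cosh_distH // minkowskiC -g0 inner // sub0r coshN cosh_distH.
by rewrite (cosh_distH xH qH) -[in minkowski x q]gL inner // cosh_distH.
Qed.

Lemma hyperbolic_detour_le x y eps D : ptH x ->
  closest_on_segment (@distH R d) p q g x y -> 0 < eps -> L <= D ->
  distH x y <= Num.sqrt eps * Num.min (distH p y) (distH q y) ->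
  distH p x + distH x q <= (1 + expR D * eps) * L.
Proof.
move=> xH cl e0 LD; have [t0 [t0I [yE _]]] := cl.
have yH : ptH y by rewrite yE; apply: hyperbolic_segment_pt.
have [g0 [gL _]] := seg.
have L0 : 0 <= L by case/andP: t0I; apply: le_trans.
have pH : ptH p by rewrite -g0; apply: hyperbolic_segment_pt; rewrite lexx L0.
have qH : ptH q by rewrite -gL; apply: hyperbolic_segment_pt; rewrite lexx L0.
apply: (segment_detour_le seg cl) => //.
- exact: distHC.
- exact: distH_ge0.
- exact: distH_eq0.
- by rewrite ltW.
- by rewrite lerDl mulr_ge0 ?expR_ge0 ?ltW.
move=> a aI -> ymin ha hb; have [px xq] := hyperbolic_pythagoras xH aI ymin.
have /andP[a0 aL] := aI.
have aD : 0 <= a <= D by apply/andP; split; lra.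
have bD : 0 <= L - a <= D by apply/andP; split; lra.
have h0 : 0 <= distH x (g a).
  by apply: distH_ge0 => //; apply: hyperbolic_segment_pt; rewrite !ltW.
have := hypotenuseH_le aD h0 (distH_ge0 pH xH) e0 ha px.
have := hypotenuseH_le bD h0 (distH_ge0 xH qH) e0 hb xq.
lra.
Qed.

End HyperbolicSpace.

Theorem mainTheorem4 (R : realType) (d : nat) (hd : (2 <= d)%N) :
  (* (i) Euclidean case *)
  (forall (p q x y : 'rV[R]_d) (g : R -> 'rV[R]_d) (eps : R),
     shortest_segment (@ptE R d) (@distE R d) p q g ->
     closest_on_segment (@distE R d) p q g x y ->
     0 < eps <= 1 ->
     distE x y <= Num.sqrt eps * Num.min (distE p y) (distE q y) ->
     distE p x + distE x q <= (1 + eps) * distE p q) /\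
  (* (i) spherical case *)
  (forall (p q x y : 'rV[R]_d.+1) (g : R -> 'rV[R]_d.+1) (eps : R),
     ptS p -> ptS q -> ptS x ->
     shortest_segment (@ptS R d) (@distS R d) p q g ->
     closest_on_segment (@distS R d) p q g x y ->
     0 < eps <= 1 ->
     distS x y <= Num.sqrt eps * Num.min (distS p y) (distS q y) ->
     distS p x + distS x q <= (1 + eps) * distS p q) /\
  (* (ii) hyperbolic case *)
  (forall (p q x y : 'rV[R]_d.+1) (g : R -> 'rV[R]_d.+1) (eps Delta : R),
     ptH p -> ptH q -> ptH x ->
     shortest_segment (@ptH R d) (@distH R d) p q g ->
     closest_on_segment (@distH R d) p q g x y ->
     0 < eps <= 1 ->
     0 < Delta -> distH p q <= Delta ->
     distH x y <= Num.sqrt eps * Num.min (distH p y) (distH q y) ->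
     distH p x + distH x q <= (1 + expR Delta * eps) * distH p q).
Proof.
split.
  move=> p q x y g eps seg cl /andP[e0 _].
  exact: (euclidean_detour_le seg cl (ltW e0)).
split.
  move=> p q x y g eps _ _ xS seg cl eI.
  exact: (spherical_detour_le seg xS cl eI).
move=> p q x y g eps D _ _ xH seg cl /andP[e0 _] _ LD.
exact: (hyperbolic_detour_le seg xH cl e0 LD).
Qed.
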